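(* Let $M$ be an $A$-module and $\Omega M$ a syzygy of $M$ (the kernel of an epimorphism from a projective module onto $M$). Then $\mathrm{Ext}^n_A(G,M)=0$ for all $n\ge1$ and all Gorenstein-projective $G$ if and only if $\mathrm{Ext}^n_A(G,\Omega M)=0$ for all $n\ge1$ and all Gorenstein-projective $G$.
   Context: $A$ is an artin algebra; modules are arbitrary left $A$-modules. A complex $P^\bullet$ of projective modules is totally acyclic if it is acyclic and $\mathrm{Hom}_A(P^\bullet,Q)$ is acyclic for every projective $Q$; a module is Gorenstein-projective if it is isomorphic to $Z^0(P^\bullet)$ for such $P^\bullet$. *)

From HB Require Import structures.
From mathcomp Require Import all_boot all_algebra.
Set Implicit Arguments. Unset Strict Implicit. Unset Printing Implicit Defensive.
Import GRing.Theory.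
Local Open Scope ring_scope.

Definition is_ideal (R : comNzRingType) (I : R -> Prop) : Prop :=
  I 0 /\ (forall x y, I x -> I y -> I (x + y)) /\ (forall r x, I x -> I (r * x)).

Definition artinian (R : comNzRingType) : Prop :=
  forall I : nat -> R -> Prop,
    (forall n, is_ideal (I n)) ->
    (forall n x, I n.+1 x -> I n x) ->
    exists N, forall n, (N <= n)%N -> forall x, I n x <-> I N x.

Definition fin_gen_over (R : comNzRingType) (A : algType R) : Prop :=
  exists s : seq A, forall a : A,
    exists c : 'I_(size s) -> R, a = \sum_(i < size s) c i *: s`_i.

(* An artin algebra: an R-algebra (R maps into the centre of A, as encoded by
   [algType]) over a commutative artinian ring R, finitely generated as R-module. *)
Definition artin_algebra (R : comNzRingType) (A : algType R) : Prop :=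
  artinian R /\ fin_gen_over A.

Section Modules.
Variable A : pzRingType.

Definition projective (P : lmodType A) : Prop :=
  forall (X Y : lmodType A) (g : {linear X -> Y}) (f : {linear P -> Y}),
    (forall y, exists x, g x = y) ->
    exists h : {linear P -> X}, forall p, g (h p) = f p.

Record complex := Complex {
  cobj : int -> lmodType A;
  cd : forall k : int, {linear cobj k -> cobj (k + 1)} }.

Definition is_complex (C : complex) : Prop :=
  forall k x, cd C (k + 1) (cd C k x) = 0.

Definition acyclic (C : complex) : Prop :=
  is_complex C /\
  forall k (y : cobj C (k + 1)), cd C (k + 1) y = 0 -> exists x, cd C k x = y.

(* Hom_A(C, Q) is acyclic: exactness of
   Hom(C^{k+2},Q) -> Hom(C^{k+1},Q) -> Hom(C^k,Q) for every k. *)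
Definition Hom_acyclic (C : complex) (Q : lmodType A) : Prop :=
  forall k (phi : {linear cobj C (k + 1) -> Q}),
    (forall x, phi (cd C k x) = 0) ->
    exists psi : {linear cobj C (k + 1 + 1) -> Q},
      forall x, psi (cd C (k + 1) x) = phi x.

Definition totally_acyclic (C : complex) : Prop :=
  (forall k, projective (cobj C k)) /\ acyclic C /\
  forall Q : lmodType A, projective Q -> Hom_acyclic C Q.

(* G is isomorphic to Z^0(C) = ker (d^0 : C^0 -> C^1) *)
Definition gorenstein_projective (G : lmodType A) : Prop :=
  exists C : complex, totally_acyclic C /\
  exists i : {linear G -> cobj C 0},
    injective i /\ forall x, cd C 0 x = 0 <-> exists g, i g = x.

(* ... -> P_2 -> P_1 -> P_0 -> G -> 0 *)
Record proj_res (G : lmodType A) := ProjRes {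
  robj : nat -> lmodType A;
  rd : forall n : nat, {linear robj n.+1 -> robj n};
  raug : {linear robj 0 -> G} }.

Definition is_proj_res (G : lmodType A) (R : proj_res G) : Prop :=
  (forall n, projective (robj R n)) /\
  (forall g, exists x, raug R x = g) /\
  (forall x, raug R x = 0 <-> exists y, rd R 0 y = x) /\
  (forall n x, rd R n x = 0 <-> exists y, rd R n.+1 y = x).

(* Ext^n_A(G, M) = 0, computed as the n-th cohomology of Hom_A(P_., M) for a
   projective resolution P_. of G (this is independent of the resolution; we
   require it for every projective resolution). *)
Definition Ext_eq0 (n : nat) (G M : lmodType A) : Prop :=
  forall R : proj_res G, is_proj_res R ->
  match n return Prop with
  | 0 => forall phi : {linear robj R 0 -> M},
           (forall x, phi (rd R 0 x) = 0) -> forall x, phi x = 0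
  | m.+1 => forall phi : {linear robj R m.+1 -> M},
           (forall x, phi (rd R m.+1 x) = 0) ->
           exists psi : {linear robj R m -> M}, forall x, phi x = psi (rd R m x)
  end.

End Modules.

From HB Require Import structures.
From mathcomp Require Import all_boot all_algebra.
From mathcomp Require Import boolp.
Set Implicit Arguments. Unset Strict Implicit. Unset Printing Implicit Defensive.
Import GRing.Theory.
Local Open Scope ring_scope.

(* Both directions are read off the long exact Ext sequence of
   0 -> OmegaM -> P -> M -> 0, once one knows Ext^n(G, Q) = 0 for n >= 1, G
   Gorenstein-projective and Q projective; this holds for the resolution of
   G = Z^0 given by the non-positive part of a totally acyclic complex C, hence
   for every resolution by the comparison theorem.  The only degree not covered
   by the sequence is Hom(G, P) -> Hom(G, M), which must be onto: the boundary
   module Im d^0 = Z^1 is again Gorenstein-projective, so Ext^1(Z^1, M) = 0 lets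
   every map G -> M extend along G -> C^0, and C^0 is projective. *)

Section LinearOf.
Variables (A : pzRingType) (X Y : lmodType A) (f : X -> Y).
Hypothesis f_linear : linear f.

Definition linear_of : X -> Y := f.
HB.instance Definition _ := GRing.isLinear.Build A X Y *:%R linear_of f_linear.

Lemma exists_linear : exists g : {linear X -> Y}, forall x, g x = f x.
Proof. by exists linear_of. Qed.
End LinearOf.

Section Image.
Variables (A : pzRingType) (X V : lmodType A) (g : {linear X -> V}).

Definition in_image : {pred V} := fun y => `[< exists x, g x = y >].

Lemma in_imageP y : reflect (exists x, g x = y) (y \in in_image).
Proof. exact: asboolP. Qed.

Lemma in_image_submod_closed : subsemimod_closed in_image.
Proof.
split; first split.
- by apply/in_imageP; exists 0; rewrite linear0.
- move=> _ _ /in_imageP[x <-] /in_imageP[y <-]; apply/in_imageP.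
  by exists (x + y); rewrite linearD.
- move=> a _ /in_imageP[x <-]; apply/in_imageP.
  by exists (a *: x); rewrite linearZ.
Qed.
HB.instance Definition _ :=
  GRing.isSubmodClosed.Build A V in_image in_image_submod_closed.

Inductive image_mod : predArgType := ImageMod u of u \in in_image.
Definition image_val (w : image_mod) : V := let: ImageMod u _ := w in u.
HB.instance Definition _ := [isSub of image_mod for image_val].
HB.instance Definition _ := [Choice of image_mod by <:].
HB.instance Definition _ := [SubChoice_isSubLmodule of image_mod by <:].

Lemma image_val_linear : linear image_val. Proof. by []. Qed.
HB.instance Definition _ :=
  GRing.isLinear.Build A image_mod V *:%R image_val image_val_linear.

Lemma image_val_inj : injective image_val. Proof. exact: val_inj. Qed.

Lemma image_valP y : (exists w, image_val w = y) <-> exists x, g x = y.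
Proof.
split=> [[[u /in_imageP u_im] <-] // | /in_imageP y_im].
by exists (ImageMod y_im).
Qed.

Definition corestr (x : X) : image_mod :=
  ImageMod (introT (in_imageP _) (ex_intro _ x erefl)).

Lemma corestr_linear : linear corestr.
Proof. by move=> a x y; apply: val_inj; rewrite /= linearP. Qed.
HB.instance Definition _ :=
  GRing.isLinear.Build A X image_mod *:%R corestr corestr_linear.

Lemma corestr_surj w : exists x, corestr x = w.
Proof.
case: w => u u_im; have /in_imageP[x xu] := u_im.
by exists x; apply: val_inj.
Qed.
End Image.

Section Factorization.
Variable A : pzRingType.
Implicit Types X Y Z P : lmodType A.

Lemma factor_inj X Y Z (j : {linear X -> Y}) (h : {linear Z -> Y}) :
  injective j -> (forall z, exists x, j x = h z) ->
  exists k : {linear Z -> X}, forall z, j (k z) = h z.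
Proof.
move=> j_inj h_im; pose k z := sval (cid (h_im z)).
have kE z : j (k z) = h z by rewrite /k; case: cid.
have k_linear : linear k.
  by move=> a x y; apply: j_inj; rewrite linearP !kE linearP.
have [k' k'E] := exists_linear k_linear.
by exists k' => z; rewrite k'E.
Qed.

Lemma factor_surj X Y Z (s : {linear X -> Y}) (h : {linear X -> Z}) :
  (forall y, exists x, s x = y) -> (forall x, s x = 0 -> h x = 0) ->
  exists k : {linear Y -> Z}, forall x, k (s x) = h x.
Proof.
move=> s_surj s_ker; pose c y := sval (cid (s_surj y)).
have cE y : s (c y) = y by rewrite /c; case: cid.
have h_eq x x' : s x = s x' -> h x = h x'.
  move=> e; apply/eqP; rewrite -subr_eq0 -linearB s_ker //.
  by rewrite linearB e subrr.
have hc_linear : linear (h \o c).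
  by move=> a y y'; rewrite /= -linearP; apply: h_eq; rewrite !linearP !cE.
have [k kE] := exists_linear hc_linear.
by exists k => x; rewrite kE; apply: h_eq; rewrite cE.
Qed.

Lemma projective_lift P X Y (g : {linear X -> Y}) (f : {linear P -> Y}) :
  projective P -> (forall q, exists x, g x = f q) ->
  exists h : {linear P -> X}, forall q, g (h q) = f q.
Proof.
move=> P_proj f_im.
have [f' f'E] : exists f' : {linear P -> image_mod g},
    forall q, image_val (f' q) = f q.
  by apply: factor_inj (@image_val_inj _ _ _ g) _ => q; apply/image_valP.
have [h hE] := P_proj _ _ (corestr g) f' (@corestr_surj _ _ _ g).
by exists h => q; rewrite -f'E -hE.
Qed.
End Factorization.

Section Resolutions.
Variables (A : pzRingType) (G : lmodType A).
Implicit Types (R S T U : proj_res G) (Q : lmodType A).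

(* [Ext_eq0 m.+1 G Q] unfolds to [forall R, is_proj_res R -> Hom_res_exact R Q m]. *)
Definition Hom_res_exact R Q (m : nat) : Prop :=
  forall theta : {linear robj R m.+1 -> Q}, (forall x, theta (rd R m.+1 x) = 0) ->
  exists psi : {linear robj R m -> Q}, forall x, theta x = psi (rd R m x).

Lemma proj_res_dd R : is_proj_res R -> forall n y, rd R n (rd R n.+1 y) = 0.
Proof. by case=> _ [_ [_ rd_ker]] n y; apply/rd_ker; exists y. Qed.

Lemma proj_res_aug_d R : is_proj_res R -> forall y, raug R (rd R 0 y) = 0.
Proof. by case=> _ [_ [aug_ker _]] y; apply/aug_ker; exists y. Qed.

Definition chain_map S T (gam : forall k, {linear robj S k -> robj T k}) : Prop :=
  (forall x, raug T (gam 0%N x) = raug S x) /\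
  (forall k x, rd T k (gam k.+1 x) = gam k (rd S k x)).
Arguments chain_map : clear implicits.

Lemma chain_map_comp S T U alpha beta :
  chain_map S T alpha -> chain_map T U beta ->
  chain_map S U (fun k => beta k \o alpha k).
Proof.
move=> [alpha_aug alpha_d] [beta_aug beta_d]; split=> [x | k x] /=.
  by rewrite beta_aug alpha_aug.
by rewrite beta_d alpha_d.
Qed.

Section ChainLift.
Variables S T : proj_res G.
Hypotheses (S_res : is_proj_res S) (T_res : is_proj_res T).

Definition maps_boundaries k (g : {linear robj S k -> robj T k}) : Prop :=
  forall y, exists x, rd T k x = g (rd S k y).

Lemma chain_lift0 : exists g : {linear robj S 0 -> robj T 0},
  (forall x, raug T (g x) = raug S x) /\ maps_boundaries g.
Proof.
have [S_proj _] := S_res; have [_ [T_surj [T_aug_ker _]]] := T_res.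
have [g gE] := projective_lift (S_proj 0%N) (fun q => T_surj (raug S q)).
exists g; split=> // y; apply/T_aug_ker.
by rewrite gE (proj_res_aug_d S_res).
Qed.

Lemma chain_liftS k (g : {linear robj S k -> robj T k}) : maps_boundaries g ->
  exists g' : {linear robj S k.+1 -> robj T k.+1},
    (forall x, rd T k (g' x) = g (rd S k x)) /\ maps_boundaries g'.
Proof.
move=> g_bd; have [S_proj _] := S_res; have [_ [_ [_ T_rd_ker]]] := T_res.
have [g' g'E] := projective_lift (f := g \o rd S k) (S_proj k.+1) g_bd.
exists g'; split=> [x | y]; first exact: g'E.
by apply/T_rd_ker; rewrite g'E /= (proj_res_dd S_res) linear0.
Qed.

Fixpoint chain_lift k : {g : {linear robj S k -> robj T k} | maps_boundaries g} :=
  match k with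
  | 0 => let g0 := cid chain_lift0 in exist _ (sval g0) (proj2 (svalP g0))
  | k'.+1 => let g := cid (chain_liftS (svalP (chain_lift k'))) in
             exist _ (sval g) (proj2 (svalP g))
  end.

Lemma chain_map_exists : exists gam, chain_map S T gam.
Proof.
exists (fun k => sval (chain_lift k)); split.
  exact: (proj1 (svalP (cid chain_lift0))).
move=> k; exact: (proj1 (svalP (cid (chain_liftS (svalP (chain_lift k)))))).
Qed.
End ChainLift.

Lemma chain_endo_homotopy R gam : is_proj_res R -> chain_map R R gam ->
  forall k, exists h : {linear robj R k -> robj R k.+1},
    forall y, rd R k (y - gam k.+1 y - h (rd R k y)) = 0.
Proof.
move=> R_res [gam_aug gam_d]; have [R_proj [_ [R_aug_ker R_rd_ker]]] := R_res.
elim=> [|k [h hE]].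
  have [h hE] := projective_lift (g := rd R 0) (f := idfun \- gam 0%N) (R_proj 0%N)
    (fun q => ltac:(by apply/R_aug_ker; rewrite /= linearB gam_aug subrr)).
  by exists h => y; rewrite !linearB hE /= gam_d subrr.
have [h' h'E] := projective_lift (g := rd R k.+1)
  (f := (idfun \- gam k.+1) \- (h \o rd R k)) (R_proj k.+1)
  (fun q => ltac:(by apply/R_rd_ker; exact: hE)).
exists h' => y; rewrite !linearB h'E /= gam_d (proj_res_dd R_res) linear0.
by rewrite !subr0 subrr.
Qed.

Lemma Hom_res_exact_transfer R R' Q m : is_proj_res R -> is_proj_res R' ->
  Hom_res_exact R' Q m -> Hom_res_exact R Q m.
Proof.
move=> R_res R'_res R'_exact theta theta_cc.
have [alpha alpha_cm] := chain_map_exists R'_res R_res.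
have [beta beta_cm] := chain_map_exists R_res R'_res.
have [h hE] := chain_endo_homotopy R_res (chain_map_comp beta_cm alpha_cm) m.
have [phi phiE] := R'_exact (theta \o alpha m.+1)
  (fun x => ltac:(by rewrite /= -(proj2 alpha_cm) theta_cc)).
(* On R_{m+1}, theta = theta \o alpha \o beta + theta \o h \o d up to cycles,
   which theta kills, and theta \o alpha is a coboundary on R'. *)
exists ((phi \o beta m) \+ (theta \o h)) => y /=.
have [_ [_ [_ R_rd_ker]]] := R_res.
have [z zE] := proj1 (R_rd_ker _ _) (hE y).
move: (theta_cc z); rewrite zE !linearB /= -(proj2 beta_cm) -phiE /=.
by move/eqP; rewrite subr_eq0 subr_eq addrC => /eqP.
Qed.
End Resolutions.

Section TruncatedResolution.
Variables (A : pzRingType) (C : complex A).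

Definition cobj_cast i j (e : i = j) : {linear cobj C i -> cobj C j} :=
  match e in _ = j' return {linear cobj C i -> cobj C j'} with erefl => idfun end.

Lemma cobj_cast_id i (e : i = i) x : cobj_cast e x = x.
Proof. by rewrite (eq_irrelevance e erefl). Qed.

Lemma cobj_cast_eq0 i j (e : i = j) x : cobj_cast e x = 0 <-> x = 0.
Proof. by case: j / e. Qed.

Lemma acyclic_cast_ker i j (e : i + 1 = j) : acyclic C ->
  forall x, cd C j x = 0 <-> exists y, cobj_cast e (cd C i y) = x.
Proof.
case: j / e => -[C_dd C_ex] x.
by split=> [/C_ex | [y <-]]; last exact: C_dd.
Qed.

Lemma Hom_acyclic_cast Q i j k (e1 : i + 1 = j) (e2 : j + 1 = k) :
  Hom_acyclic C Q -> forall theta : {linear cobj C j -> Q},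
  (forall x, theta (cobj_cast e1 (cd C i x)) = 0) ->
  exists psi : {linear cobj C k -> Q}, forall x, theta x = psi (cobj_cast e2 (cd C j x)).
Proof.
case: j / e1 e2 => e2; case: k / e2 => C_hom theta theta_cc.
have [psi psiE] := C_hom i theta theta_cc.
by exists psi => x; rewrite cobj_cast_id psiE.
Qed.

Variables (idx : nat -> int) (idxS : forall k, idx k.+1 + 1 = idx k).

Definition trunc_d k : {linear cobj C (idx k.+1) -> cobj C (idx k)} :=
  cobj_cast (idxS k) \o cd C (idx k.+1).

Definition trunc_res (X : lmodType A) (aug : {linear cobj C (idx 0) -> X}) : proj_res X :=
  @ProjRes A X (fun k => cobj C (idx k)) trunc_d aug.

Lemma trunc_res_proj_res (X : lmodType A) (j : {linear X -> cobj C (idx 0 + 1)})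
    (aug : {linear cobj C (idx 0) -> X}) :
  (forall k, projective (cobj C k)) -> acyclic C -> injective j ->
  (forall x, cd C (idx 0 + 1) x = 0 <-> exists g, j g = x) ->
  (forall x, j (aug x) = cd C (idx 0) x) -> is_proj_res (trunc_res aug).
Proof.
move=> C_proj C_acyc j_inj j_ker j_aug.
split; first by move=> k; exact: C_proj.
split.
  move=> g; have [_ C_ex] := C_acyc.
  have [x xE] := C_ex _ (j g) (proj2 (j_ker _) (ex_intro _ g erefl)).
  by exists x; apply: j_inj; rewrite j_aug.
split.
  move=> x; split=> [aug_x0 | [y <-]].
    apply/(acyclic_cast_ker (idxS 0) C_acyc).
    by rewrite -j_aug /= aug_x0 linear0.
  apply: j_inj; rewrite j_aug linear0.
  by apply/(acyclic_cast_ker (idxS 0) C_acyc); exists y.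
move=> n x; rewrite /= /trunc_d /= cobj_cast_eq0.
exact: acyclic_cast_ker.
Qed.

Lemma trunc_res_Hom_exact (X : lmodType A) (aug : {linear cobj C (idx 0) -> X}) Q m :
  Hom_acyclic C Q -> Hom_res_exact (trunc_res aug) Q m.
Proof. by move=> C_hom theta; apply: Hom_acyclic_cast C_hom theta. Qed.
End TruncatedResolution.
Arguments trunc_res {A} C idx idxS {X} aug.

Definition neg_deg (k : nat) : int := - k%:Z.

Lemma neg_degS k : neg_deg k.+1 + 1 = neg_deg k.
Proof. by rewrite /neg_deg -addn1 PoszD opprD subrK. Qed.

Section GorensteinProjective.
Variable A : pzRingType.
Implicit Type C : complex A.

Definition shift_complex (C : complex A) : complex A :=
  @Complex A (fun k => cobj C (k + 1)) (fun k => cd C (k + 1)).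

Lemma shift_totally_acyclic C : totally_acyclic C -> totally_acyclic (shift_complex C).
Proof.
case=> C_proj [[C_dd C_ex] C_hom]; split; first by move=> k; exact: C_proj.
split; first by split=> k; [exact: C_dd | exact: C_ex].
by move=> Q /C_hom C_hom' k; exact: C_hom'.
Qed.

Lemma gorenstein_projective_boundaries C :
  totally_acyclic C -> gorenstein_projective (image_mod (cd C 0)).
Proof.
move=> C_ta; have [_ [[C_dd C_ex] _]] := C_ta.
exists (shift_complex C); split; first exact: shift_totally_acyclic.
exists (@image_val _ _ _ (cd C 0)); split; first exact: image_val_inj.
move=> x; split=> [/C_ex x_im | /image_valP[y <-]]; last exact: C_dd.
exact/image_valP.
Qed.

Section Cycles.
Variables (C : complex A) (G : lmodType A) (j : {linear G -> cobj C 0}).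
Hypotheses (C_ta : totally_acyclic C) (j_inj : injective j)
  (j_ker : forall x, cd C 0 x = 0 <-> exists g, j g = x).

Lemma cycles_aug_exists : exists aug : {linear cobj C (neg_deg 1) -> G},
  forall x, j (aug x) = cd C (neg_deg 1) x.
Proof.
apply: factor_inj j_inj _ => x; apply/j_ker.
by have [_ [[C_dd _] _]] := C_ta; exact: (C_dd (neg_deg 1) x).
Qed.

Lemma cycles_res_proj_res (aug : {linear cobj C (neg_deg 1) -> G}) :
  (forall x, j (aug x) = cd C (neg_deg 1) x) ->
  is_proj_res (trunc_res C (fun k => neg_deg k.+1) (fun k => neg_degS k.+1) aug).
Proof.
have [C_proj [C_acyc _]] := C_ta.
exact: (@trunc_res_proj_res _ C (fun k => neg_deg k.+1) _ G j aug
  C_proj C_acyc j_inj j_ker).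
Qed.

Lemma cycles_extend (M : lmodType A) :
  (forall G', gorenstein_projective G' -> Ext_eq0 1 G' M) ->
  forall f : {linear G -> M}, exists psi : {linear cobj C 0 -> M},
    forall g, psi (j g) = f g.
Proof.
move=> Ext1_M f; have [C_proj [C_acyc _]] := C_ta.
have [aug augE] := cycles_aug_exists.
have G_res := cycles_res_proj_res augE.
have [_ [aug_surj _]] := G_res.
(* C^0 <- C^{-1} <- ... resolves Im d^0; from degree 1 on it is G_res itself. *)
have B_res : is_proj_res (trunc_res C neg_deg neg_degS (corestr (cd C 0))).
  apply: (@trunc_res_proj_res _ C neg_deg neg_degS _ _ _ C_proj C_acyc
    (@image_val_inj _ _ _ (cd C 0))) => // x.
  split=> [/C_acyc.2 x_im | /image_valP[y <-]]; last exact: C_acyc.1.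
  exact/image_valP.
have [psi psiE] := Ext1_M _ (gorenstein_projective_boundaries C_ta) _ B_res
  (f \o aug) (fun x => ltac:(by rewrite /= (proj_res_aug_d G_res) linear0)).
exists psi => g; have [x <-] := aug_surj g.
move: (psiE x); rewrite /= /trunc_d /= => ->.
by rewrite augE cobj_cast_id.
Qed.
End Cycles.

Lemma gorenstein_projective_Hom_res_exact (G Q : lmodType A) (R : proj_res G) m :
  gorenstein_projective G -> projective Q -> is_proj_res R -> Hom_res_exact R Q m.
Proof.
case=> C [C_ta [j [j_inj j_ker]]] Q_proj R_res.
have [aug augE] := cycles_aug_exists C_ta j_inj j_ker.
apply: Hom_res_exact_transfer R_res (cycles_res_proj_res C_ta j_inj j_ker augE) _.
by apply: trunc_res_Hom_exact; have [_ [_ C_hom]] := C_ta; exact: C_hom.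
Qed.

Lemma gorenstein_projective_lift (G M P : lmodType A) (p : {linear P -> M}) :
  (forall G', gorenstein_projective G' -> Ext_eq0 1 G' M) ->
  gorenstein_projective G -> (forall m, exists x, p x = m) ->
  forall f : {linear G -> M}, exists f' : {linear G -> P}, forall g, p (f' g) = f g.
Proof.
move=> Ext1_M [C [C_ta [j [j_inj j_ker]]]] p_surj f.
have [psi psiE] := cycles_extend C_ta j_inj j_ker Ext1_M f.
have [C_proj _] := C_ta.
have [psi' psi'E] := C_proj 0 _ _ p psi p_surj.
by exists (psi' \o j) => g; rewrite /= psi'E psiE.
Qed.
End GorensteinProjective.

Section ShortExactSequence.
Variables (A : pzRingType) (G K P M : lmodType A) (R : proj_res G).
Variables (i : {linear K -> P}) (p : {linear P -> M}).
Hypotheses (R_res : is_proj_res R) (i_inj : injective i)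
  (p_surj : forall m, exists x, p x = m)
  (i_ker : forall x, p x = 0 <-> exists k, i k = x).

Definition cocycles_lift m : Prop :=
  forall c : {linear robj R m -> M}, (forall x, c (rd R m x) = 0) ->
  exists c' : {linear robj R m -> P},
    (forall x, c' (rd R m x) = 0) /\ forall x, p (c' x) = c x.

Lemma cocycles_lift0 :
  (forall f : {linear G -> M}, exists f' : {linear G -> P}, forall g, p (f' g) = f g) ->
  cocycles_lift 0.
Proof.
move=> lift c c_cc; have [_ [aug_surj [aug_ker _]]] := R_res.
have [f fE] := factor_surj (h := c) aug_surj
  (fun x x_ker => ltac:(by have [y <-] := proj1 (aug_ker x) x_ker)).
have [f' f'E] := lift f.
exists (f' \o raug R); split=> x /=; first by rewrite (proj_res_aug_d R_res) linear0.
by rewrite f'E fE.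
Qed.

Lemma cocycles_liftS m : Hom_res_exact R M m -> cocycles_lift m.+1.
Proof.
move=> M_exact c c_cc; have [R_proj _] := R_res.
have [phi phiE] := M_exact c c_cc.
have [phi' phi'E] := R_proj m _ _ p phi p_surj.
exists (phi' \o rd R m); split=> x /=; first by rewrite (proj_res_dd R_res) linear0.
by rewrite phi'E phiE.
Qed.

Lemma Hom_res_exact_sub m :
  Hom_res_exact R P m -> cocycles_lift m -> Hom_res_exact R K m.
Proof.
move=> P_exact lift chi chi_cc.
have [psi psiE] := P_exact (i \o chi)
  (fun x => ltac:(by rewrite /= chi_cc linear0)).
have [c' [c'_cc c'E]] := lift (p \o psi)
  (fun x => ltac:(by rewrite /= -psiE; apply/i_ker; exists (chi x))).
have [xi xiE] := factor_inj (h := psi \- c') i_inj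
  (fun y => ltac:(by apply/i_ker; rewrite /= linearB c'E subrr)).
by exists xi => x; apply: i_inj; rewrite xiE /= c'_cc subr0 -psiE.
Qed.

Lemma Hom_res_exact_quo m :
  Hom_res_exact R P m -> Hom_res_exact R K m.+1 -> Hom_res_exact R M m.
Proof.
move=> P_exact K_exact phi phi_cc; have [R_proj _] := R_res.
have pi0 k : p (i k) = 0 by apply/i_ker; exists k.
have [phi' phi'E] := R_proj m.+1 _ _ p phi p_surj.
have [chi chiE] := factor_inj (h := phi' \o rd R m.+1) i_inj
  (fun y => ltac:(by apply/i_ker; rewrite /= phi'E phi_cc)).
have chi_cc x : chi (rd R m.+2 x) = 0.
  by apply: i_inj; rewrite chiE /= (proj_res_dd R_res) !linear0.
have [xi xiE] := K_exact chi chi_cc.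
have [psi psiE] := P_exact (phi' \- (i \o xi))
  (fun x => ltac:(by rewrite /= -xiE chiE subrr)).
by exists (p \o psi) => x; rewrite /= -psiE /= linearB phi'E pi0 subr0.
Qed.
End ShortExactSequence.

Unset Implicit Arguments.
Set Strict Implicit.
Theorem corollary3p1p15 (R : comNzRingType) (A : algType R)
  (hA : artin_algebra A)
  (M OmegaM P : lmodType A) (hP : projective P)
  (p : {linear P -> M}) (p_surj : forall m, exists x, p x = m)
  (i : {linear OmegaM -> P}) (i_inj : injective i)
  (i_ker : forall x, p x = 0 <-> exists k, i k = x) :
  (forall (n : nat) (G : lmodType A), (1 <= n)%N -> gorenstein_projective G ->
     Ext_eq0 n G M) <->
  (forall (n : nat) (G : lmodType A), (1 <= n)%N -> gorenstein_projective G ->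
     Ext_eq0 n G OmegaM).
Proof.
split=> [Ext_M | Ext_OmegaM] [|m] G // _ G_gp Res Res_res.
- apply: (Hom_res_exact_sub i_inj i_ker
    (gorenstein_projective_Hom_res_exact (m := m) G_gp hP Res_res)).
  case: m => [|m].
    apply: (cocycles_lift0 Res_res) => f.
    exact: (gorenstein_projective_lift (fun G' => Ext_M 1%N G' isT) G_gp p_surj).
  exact: (cocycles_liftS Res_res p_surj (Ext_M m.+1 G isT G_gp Res Res_res)).
- exact: (Hom_res_exact_quo Res_res i_inj p_surj i_ker
    (gorenstein_projective_Hom_res_exact (m := m) G_gp hP Res_res)
    (Ext_OmegaM m.+2 G isT G_gp Res Res_res)).
Qed.
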